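(* Let $\operatorname{sinc}(x)=\frac{\sin(\pi x)}{\pi x}$ for $x\neq 0$ and $\operatorname{sinc}(0)=1$. Let $\tau\in(0,1)$ and, for an integer $n\ge 1$, define \[ G(n,\tau)\;=\;\sum_{t\in\mathbb{Z}\setminus\{0\}}\operatorname{sinc}(t-\tau)^n \;=\;\sum_{t=1}^{\infty}\operatorname{sinc}(t-\tau)^n+\sum_{t=1}^{\infty}\operatorname{sinc}(-t-\tau)^n . \] Then \[ G(n,\tau)=\begin{cases} 1-\operatorname{sinc}(\tau) & \text{if } n=1,\\[2pt] \operatorname{sinc}(\tau)^n\Big(\tau^n\big(\zeta(n,\tau)+\zeta(n,-\tau)\big)-2\Big) & \text{if } n \text{ is even},\\[2pt] \operatorname{sinc}(\tau)^n\Big(\tau^n\big(\zeta^*(n,\tau)-\zeta^*(n,-\tau)\big)-2\Big) & \text{if } n\ge 3 \text{ is odd}. \end{cases} \]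
   Context: For an integer $s\ge 2$ and a real number $q$ that is not a non-positive integer, the Hurwitz zeta function is $\zeta(s,q)=\sum_{k=0}^{\infty}\frac{1}{(k+q)^s}$ and the alternating Hurwitz zeta function is $\zeta^*(s,q)=\sum_{k=0}^{\infty}\frac{(-1)^k}{(k+q)^s}$ (in particular these series are used with $q=\tau$ and $q=-\tau$, $\tau\in(0,1)$). *)

From Stdlib Require Import Reals Lra.
From Coquelicot Require Import Coquelicot.
Open Scope R_scope.

Definition sinc (x : R) : R :=
  if Req_EM_T x 0 then 1 else sin (PI * x) / (PI * x).

Definition hurwitz_zeta (s : nat) (q : R) : R :=
  Series (fun k : nat => / (INR k + q) ^ s).

Definition alt_hurwitz_zeta (s : nat) (q : R) : R :=
  Series (fun k : nat => (-1) ^ k / (INR k + q) ^ s).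

Definition G_pos (n : nat) (tau : R) : nat -> R :=
  fun k => sinc (INR (S k) - tau) ^ n.
Definition G_neg (n : nat) (tau : R) : nat -> R :=
  fun k => sinc (- INR (S k) - tau) ^ n.

Definition G (n : nat) (tau : R) : R :=
  Series (G_pos n tau) + Series (G_neg n tau).

(* For k >= 0, sin (PI (k + 1 -+ tau)) = +- (-1)^k sin (PI tau), so with
   s = sin (PI tau) / PI and e = (-1)^n the terms of the two series are
   s^n e^k / (k + 1 - tau)^n and s^n e^(k+1) / (k + 1 + tau)^n.  These are shifted tails of
   sum_k e^k / (k + q)^n at q = -tau and q = tau, i.e. of the Hurwitz zeta function (n even)
   or its alternating version (n odd); peeling off the k = 0 terms gives the formula.
   For n = 1 the two series combine into the partial-fraction expansion
   PI / sin (PI a) = 1/a + sum_(m >= 1) (-1)^m 2a / (a^2 - m^2), proved with the Fejer kernel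
   F_N: integrating (1 - cos (a x)) F_N (x), which lies in [0, 1], over [-PI, PI] shows that
   the Cesaro means of the partial sums tend to PI / sin (PI a). *)

From Stdlib Require Import Reals Lra Lia.
From Coquelicot Require Import Coquelicot.
Open Scope R_scope.

Lemma sin_plus_INR_PI (m : nat) (x : R) : sin (x + INR m * PI) = (-1) ^ m * sin x.
Proof.
  induction m as [|m IH].
  - simpl; rewrite Rmult_0_l, Rplus_0_r; ring.
  - rewrite S_INR, Rmult_plus_distr_r, Rmult_1_l, <- Rplus_assoc, neg_sin, IH.
    simpl; ring.
Qed.

Lemma sin_minus_INR_PI (m : nat) (x : R) : sin (x - INR m * PI) = (-1) ^ m * sin x.
Proof.
  replace (x - INR m * PI) with (- (- x + INR m * PI)) by ring.
  rewrite sin_neg, sin_plus_INR_PI, sin_neg; ring.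
Qed.

Lemma sinc_opp (x : R) : sinc (- x) = sinc x.
Proof.
  unfold sinc.
  destruct (Req_EM_T (- x) 0), (Req_EM_T x 0); try reflexivity; try lra.
  replace (PI * - x) with (- (PI * x)) by ring.
  rewrite sin_neg; field; repeat split; try exact PI_neq0; intro; lra.
Qed.

Lemma sinc_plus_INR (x : R) (m : nat) : x + INR m <> 0 ->
  sinc (x + INR m) = (-1) ^ m * sin (PI * x) / (PI * (x + INR m)).
Proof.
  intros Hx; unfold sinc.
  destruct (Req_EM_T (x + INR m) 0) as [E | _]; [contradiction |].
  replace (PI * (x + INR m)) with (PI * x + INR m * PI) by ring.
  now rewrite sin_plus_INR_PI.
Qed.

Lemma pow_sign_div (e x y : R) (n k : nat) :
  (e ^ k * x / y) ^ n = x ^ n * ((e ^ n) ^ k / y ^ n).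
Proof.
  unfold Rdiv; rewrite !Rpow_mult_distr, pow_inv, <- !pow_mult, Nat.mul_comm; ring.
Qed.

Section SincAtShifts.

Variable tau : R.
Hypothesis htau : 0 < tau < 1.

Let s := sin (PI * tau) / PI.

Lemma sinc_eq_ratio : sinc tau = s / tau.
Proof.
  unfold sinc, s; destruct (Req_EM_T tau 0); [lra |].
  field; repeat split; try exact PI_neq0; intro; lra.
Qed.

Lemma sinc_nat_minus (k : nat) :
  sinc (INR (S k) - tau) = (-1) ^ k * s / (INR k + (- tau + 1)).
Proof.
  assert (Hk := pos_INR k).
  replace (INR (S k) - tau) with (- tau + INR (S k)) by ring.
  rewrite sinc_plus_INR by (rewrite S_INR; intro; lra).
  rewrite Ropp_mult_distr_r_reverse, sin_neg, S_INR; unfold s; simpl pow.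
  field; repeat split; try exact PI_neq0; intro; lra.
Qed.

Lemma sinc_opp_nat_minus (k : nat) :
  sinc (- INR (S k) - tau) = (-1) ^ S k * s / (INR k + (tau + 1)).
Proof.
  assert (Hk := pos_INR k).
  replace (- INR (S k) - tau) with (- (tau + INR (S k))) by ring.
  rewrite sinc_opp, sinc_plus_INR by (rewrite S_INR; intro; lra).
  rewrite S_INR; unfold s.
  field; repeat split; try exact PI_neq0; intro; lra.
Qed.


Lemma G_pos_eq (n k : nat) :
  G_pos n tau k = s ^ n * (((-1) ^ n) ^ k / (INR k + (- tau + 1)) ^ n).
Proof. unfold G_pos; now rewrite sinc_nat_minus, pow_sign_div. Qed.

Lemma G_neg_eq (n k : nat) :
  G_neg n tau k = s ^ n * ((-1) ^ n * (((-1) ^ n) ^ k / (INR k + (tau + 1)) ^ n)).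
Proof.
  unfold G_neg; rewrite sinc_opp_nat_minus, pow_sign_div, <- tech_pow_Rmult.
  unfold Rdiv; now rewrite Rmult_assoc.
Qed.

End SincAtShifts.

Lemma is_lim_seq_inv_INR_plus (b : R) : is_lim_seq (fun k => / (INR k + b)) 0.
Proof.
  change (Finite 0) with (Rbar_inv p_infty).
  apply is_lim_seq_inv; [| discriminate].
  eapply is_lim_seq_plus; [exact is_lim_seq_INR | apply is_lim_seq_const | reflexivity].
Qed.

Lemma is_series_telescoping (u : nat -> R) (l : R) :
  is_lim_seq u l -> is_series (fun k => u k - u (S k)) (u O - l).
Proof.
  intros Hu.
  assert (Hsum : forall N, sum_n (fun k => u k - u (S k)) N = u O - u (S N)).
  { induction N as [|N IH]; [now rewrite sum_O | rewrite sum_Sn, IH; cbn; ring]. }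
  change (is_lim_seq (sum_n (fun k => u k - u (S k))) (u O - l)).
  apply (is_lim_seq_ext (fun N => u O - u (S N))); [intros N; now rewrite Hsum |].
  apply is_lim_seq_minus'; [apply is_lim_seq_const | now apply is_lim_seq_incr_1 in Hu].
Qed.

Lemma ex_series_alt_inv (b : R) : 0 < b -> ex_series (fun k => (-1) ^ k / (INR k + b)).
Proof.
  intros Hb.
  destruct (alternated_series (fun k => / (INR k + b))) as [l Hl].
  - intros k; rewrite S_INR; assert (Hk := pos_INR k).
    apply Rinv_le_contravar; lra.
  - apply is_lim_seq_Reals, is_lim_seq_inv_INR_plus.
  - exists l; apply is_series_Reals, Hl.
Qed.

Lemma ex_series_bounded_div_pow (e : nat -> R) (b : R) (n : nat) :
  0 < b -> (2 <= n)%nat -> (forall k, Rabs (e k) <= 1) ->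
  ex_series (fun k => e k / (INR k + b) ^ n).
Proof.
  intros Hb Hn He; apply ex_series_incr_1.
  set (u k := 2 / (INR k + (b + 1))).
  apply (@ex_series_le R_AbsRing R_CompleteNormedModule _ (fun k => u k - u (S k))).
  - intros k; change norm with Rabs; cbn beta.
    assert (Hk := pos_INR k).
    set (x := INR (S k) + b).
    assert (Hx : 1 <= x) by (unfold x; rewrite S_INR; lra).
    assert (Hu : u k - u (S k) = 2 / (x * (x + 1))).
    { unfold u, x; rewrite !S_INR; field; lra. }
    rewrite Hu; unfold Rdiv; rewrite Rabs_mult, Rabs_inv, (Rabs_right (x ^ n))
      by (apply Rle_ge, pow_le; lra).
    apply Rle_trans with (1 * / x ^ 2).
    + apply Rmult_le_compat; auto using Rabs_pos.
      * left; apply Rinv_0_lt_compat, pow_lt; lra.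
      * apply Rinv_le_contravar; [apply pow_lt; lra | now apply Rle_pow].
    + rewrite Rmult_1_l; replace (2 * / (x * (x + 1))) with (/ (x * (x + 1) / 2))
        by (field; lra).
      apply Rinv_le_contravar; [apply Rdiv_lt_0_compat; nra | simpl; nra].
  - exists (u O - 0); apply is_series_telescoping.
    replace (Finite 0) with (Rbar_mult 2 0) by (simpl; f_equal; ring).
    apply is_lim_seq_scal_l, is_lim_seq_inv_INR_plus.
Qed.

Lemma ex_series_sign_div_pow (n : nat) (q : R) : (1 <= n)%nat -> 0 < q ->
  ex_series (fun k => ((-1) ^ n) ^ k / (INR k + q) ^ n).
Proof.
  intros Hn Hq; destruct (Nat.eq_dec n 1) as [-> | Hn2].
  - apply (ex_series_ext (fun k => (-1) ^ k / (INR k + q))); [intros k; now rewrite !pow_1 |].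
    now apply ex_series_alt_inv.
  - apply ex_series_bounded_div_pow; [exact Hq | lia |].
    intros k; rewrite <- pow_mult, pow_1_abs; lra.
Qed.

Lemma pow_m1_cases (n : nat) : (-1) ^ n = 1 \/ (-1) ^ n = -1.
Proof.
  destruct (Nat.Even_or_Odd n) as [[m ->] | [m ->]].
  - left; apply pow_1_even.
  - right; rewrite Nat.add_1_r; apply pow_1_odd.
Qed.

(* [alt_hurwitz_zeta] is by definition [twisted_hurwitz_zeta (-1)]. *)
Definition twisted_hurwitz_zeta (e : R) (s : nat) (q : R) : R :=
  Series (fun k => e ^ k / (INR k + q) ^ s).

Lemma hurwitz_zeta_eq_twisted (s : nat) (q : R) :
  hurwitz_zeta s q = twisted_hurwitz_zeta 1 s q.
Proof.
  apply Series_ext; intros k; rewrite pow1; unfold Rdiv; ring.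
Qed.

Lemma twisted_hurwitz_zeta_shift (n : nat) (q : R) : (1 <= n)%nat -> 0 < q + 1 ->
  twisted_hurwitz_zeta ((-1) ^ n) n q =
  / q ^ n + (-1) ^ n * twisted_hurwitz_zeta ((-1) ^ n) n (q + 1).
Proof.
  intros Hn Hq; unfold twisted_hurwitz_zeta; set (e := (-1) ^ n).
  assert (Hshift : forall k, e ^ S k / (INR (S k) + q) ^ n = e ^ k / (INR k + (q + 1)) ^ n * e).
  { intros k; rewrite S_INR, <- tech_pow_Rmult, Rplus_assoc, (Rplus_comm 1 q).
    unfold Rdiv; ring. }
  rewrite Series_incr_1.
  - rewrite (Series_ext _ _ Hshift), Series_scal_r; simpl INR.
    rewrite Rplus_0_l, pow_O; unfold Rdiv; ring.
  - apply ex_series_incr_1, (ex_series_ext _ _ (fun k => eq_sym (Hshift k))).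
    apply ex_series_scal_r, ex_series_sign_div_pow; assumption.
Qed.

Lemma G_eq_twisted_hurwitz_zeta (n : nat) (tau : R) : (1 <= n)%nat -> 0 < tau < 1 ->
  G n tau = sinc tau ^ n *
    (tau ^ n * (twisted_hurwitz_zeta ((-1) ^ n) n tau
                + (-1) ^ n * twisted_hurwitz_zeta ((-1) ^ n) n (- tau)) - 2).
Proof.
  intros Hn Htau; unfold G.
  rewrite (Series_ext _ _ (G_pos_eq tau Htau n)), (Series_ext _ _ (G_neg_eq tau Htau n)).
  rewrite !Series_scal_l, sinc_eq_ratio by exact Htau.
  rewrite (twisted_hurwitz_zeta_shift n tau), (twisted_hurwitz_zeta_shift n (- tau)) by (lia || lra).
  unfold twisted_hurwitz_zeta.
  set (A := Series _); set (B := Series _); clearbody A B.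
  replace (- tau) with (-1 * tau) by ring.
  unfold Rdiv at 3; rewrite !Rpow_mult_distr, pow_inv.
  assert (Htn : tau ^ n <> 0) by (apply pow_nonzero; lra).
  destruct (pow_m1_cases n) as [E | E]; rewrite E; field; exact Htn.
Qed.

(* [dirichlet j x = 1/2 + sum_(m = 1..j) cos (m x)] is the Dirichlet kernel and
   [fejer N] is [N + 1] times the Fejer kernel. *)
Fixpoint dirichlet (j : nat) (x : R) : R :=
  match j with
  | O => / 2
  | S j' => dirichlet j' x + cos (INR j * x)
  end.

Definition fejer (N : nat) (x : R) : R := sum_f_R0 (fun j => dirichlet j x) N.

Lemma dirichlet_closed_form (j : nat) (x : R) :
  2 * sin (x / 2) * dirichlet j x = sin ((INR j + / 2) * x).
Proof.
  induction j as [|j IH]; cbn [dirichlet].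
  - simpl INR; replace ((0 + / 2) * x) with (x / 2) by field; field.
  - rewrite Rmult_plus_distr_l, IH.
    replace ((INR j + / 2) * x) with (INR (S j) * x - x / 2) by (rewrite S_INR; field).
    replace ((INR (S j) + / 2) * x) with (INR (S j) * x + x / 2) by field.
    rewrite sin_minus, sin_plus; ring.
Qed.

Lemma fejer_closed_form (N : nat) (x : R) :
  (1 - cos x) * fejer N x = (1 - cos (INR (S N) * x)) / 2.
Proof.
  assert (Hc : 1 - cos x = 2 * sin (x / 2) ^ 2).
  { replace x with (2 * (x / 2)) at 1 by field; rewrite cos_2a_sin; ring. }
  unfold fejer; induction N as [|N IH]; cbn [sum_f_R0].
  - cbn [dirichlet]; rewrite Rmult_1_l; field.
  - rewrite Rmult_plus_distr_l, IH, Hc.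
    replace (2 * sin (x / 2) ^ 2 * dirichlet (S N) x)
      with (sin (x / 2) * (2 * sin (x / 2) * dirichlet (S N) x)) by ring.
    rewrite dirichlet_closed_form.
    replace (INR (S N) * x) with ((INR (S N) + / 2) * x - x / 2) by field.
    replace (INR (S (S N)) * x) with ((INR (S N) + / 2) * x + x / 2)
      by (rewrite (S_INR (S N)); field).
    rewrite cos_minus, cos_plus; field.
Qed.

Lemma one_minus_cos_mul_fejer_bounds (a : R) (N : nat) (x : R) :
  0 <= a <= 1 -> - PI <= x <= PI -> 0 <= (1 - cos (a * x)) * fejer N x <= 1.
Proof.
  intros Ha Hx.
  assert (Hcos : cos x <= cos (a * x)).
  { destruct (Rle_dec 0 x).
    - apply cos_decr_1; nra.
    - rewrite <- (cos_neg x), <- (cos_neg (a * x)); apply cos_decr_1; nra. }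
  assert (Hk := fejer_closed_form N x).
  assert (HN := COS_bound (INR (S N) * x)); assert (Hax := COS_bound (a * x)).
  destruct (Req_dec (cos x) 1) as [E | E].
  - replace (1 - cos (a * x)) with 0 by lra; lra.
  - assert (Hpos : 0 < 1 - cos x) by (assert (H := COS_bound x); lra).
    assert (HF : 0 <= fejer N x).
    { apply (Rmult_le_reg_l (1 - cos x)); [exact Hpos | lra]. }
    split; [apply Rmult_le_pos; lra |].
    apply Rle_trans with ((1 - cos x) * fejer N x); [apply Rmult_le_compat_r |]; lra.
Qed.

Lemma is_RInt_cos_mul (b : R) : b <> 0 ->
  is_RInt (fun x => cos (b * x)) (- PI) PI (2 * sin (b * PI) / b).
Proof.
  intros Hb.
  replace (2 * sin (b * PI) / b) with (minus (sin (b * PI) / b) (sin (b * - PI) / b))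
    by (rewrite Ropp_mult_distr_r_reverse, sin_neg; unfold minus, plus, opp; simpl; field; exact Hb).
  apply (is_RInt_derive (fun x => sin (b * x) / b)).
  - intros x _; auto_derive; [exact I | field; exact Hb].
  - intros x _; apply (ex_derive_continuous (V := R_NormedModule)); auto_derive; exact I.
Qed.

Lemma is_RInt_const_PI (c : R) : is_RInt (fun _ => c) (- PI) PI (2 * PI * c).
Proof.
  replace (2 * PI * c) with (scal (PI - - PI) c) by (unfold scal; simpl; unfold mult; simpl; ring).
  apply (is_RInt_const (V := R_NormedModule)).
Qed.

Lemma is_RInt_dirichlet (j : nat) : is_RInt (dirichlet j) (- PI) PI PI.
Proof.
  induction j as [|j IH].
  - assert (H := is_RInt_const_PI (/ 2)).
    replace (2 * PI * / 2) with PI in H by field; exact H.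
  - assert (Hcos := is_RInt_cos_mul _ (not_0_INR (S j) (Nat.neq_succ_0 j))).
    rewrite <- (Rplus_0_l (INR (S j) * PI)), sin_plus_INR_PI, sin_0, Rmult_0_r, Rmult_0_r in Hcos.
    assert (H := is_RInt_plus (V := R_NormedModule) _ _ _ _ _ _ IH Hcos).
    change (plus PI (0 / INR (S j))) with (PI + 0 / INR (S j)) in H.
    unfold Rdiv in H; rewrite Rmult_0_l, Rplus_0_r in H; exact H.
Qed.

(* [csc_partial a j = 1/a + sum_(m = 1..j) (-1)^m 2a / (a^2 - m^2)] are the partial sums
   of the partial-fraction expansion of [PI / sin (PI a)]. *)
Definition csc_term (a : R) (k : nat) : R := (-1) ^ k * (2 * a / ((INR k + 1) ^ 2 - a ^ 2)).

Fixpoint csc_partial (a : R) (j : nat) : R :=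
  match j with
  | O => / a
  | S j' => csc_partial a j' + csc_term a j'
  end.

Lemma is_RInt_cos_mul_cos (a : R) (k : nat) : 0 < a < 1 ->
  is_RInt (fun x => cos (a * x) * cos (INR (S k) * x)) (- PI) PI (sin (PI * a) * csc_term a k).
Proof.
  intros Ha; set (m := INR (S k)).
  assert (Hm : 1 <= m) by (unfold m; rewrite S_INR; assert (H := pos_INR k); lra).
  assert (Hminus : a - m <> 0) by (intro; lra).
  assert (Hplus : a + m <> 0) by (intro; lra).
  assert (Hprod : forall x,
             / 2 * (cos ((a - m) * x) + cos ((a + m) * x)) = cos (a * x) * cos (m * x)).
  { intros x.
    replace ((a - m) * x) with (a * x - m * x) by ring.
    replace ((a + m) * x) with (a * x + m * x) by ring.
    rewrite cos_minus, cos_plus; field. }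
  assert (Hval : / 2 * (2 * sin ((a - m) * PI) / (a - m) + 2 * sin ((a + m) * PI) / (a + m))
                 = sin (PI * a) * csc_term a k).
  { unfold m, csc_term; rewrite !Rmult_minus_distr_r, !Rmult_plus_distr_r.
    rewrite sin_minus_INR_PI, sin_plus_INR_PI, <- tech_pow_Rmult, <- S_INR, (Rmult_comm a PI).
    fold m; field; repeat split; try assumption.
    replace (m ^ 2 - a ^ 2) with ((m - a) * (m + a)) by ring.
    apply Rmult_integral_contrapositive; split; intro; lra. }
  rewrite <- Hval.
  apply (is_RInt_ext (fun x => / 2 * (cos ((a - m) * x) + cos ((a + m) * x))));
    [intros x _; apply Hprod |].
  apply (is_RInt_scal (V := R_NormedModule)), (is_RInt_plus (V := R_NormedModule));
    now apply is_RInt_cos_mul.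
Qed.

Lemma is_RInt_cos_mul_dirichlet (a : R) (j : nat) : 0 < a < 1 ->
  is_RInt (fun x => cos (a * x) * dirichlet j x) (- PI) PI (sin (PI * a) * csc_partial a j).
Proof.
  intros Ha; induction j as [|j IH]; cbn [dirichlet csc_partial].
  - replace (sin (PI * a) * / a) with (/ 2 * (2 * sin (a * PI) / a))
      by (rewrite (Rmult_comm a PI); field; intro; lra).
    apply (is_RInt_ext (fun x => / 2 * cos (a * x))); [intros x _; apply Rmult_comm |].
    apply (is_RInt_scal (V := R_NormedModule)), is_RInt_cos_mul; intro; lra.
  - rewrite Rmult_plus_distr_l.
    apply (is_RInt_ext (fun x => cos (a * x) * dirichlet j x + cos (a * x) * cos (INR (S j) * x)));
      [intros x _; simpl; ring |].
    apply (is_RInt_plus (V := R_NormedModule)); [exact IH | now apply is_RInt_cos_mul_cos].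
Qed.

Lemma is_RInt_sum_f_R0 (f : nat -> R -> R) (I : nat -> R) (a b : R) (N : nat) :
  (forall j, is_RInt (f j) a b (I j)) ->
  is_RInt (fun x => sum_f_R0 (fun j => f j x) N) a b (sum_f_R0 I N).
Proof.
  intros Hf; induction N as [|N IH]; cbn [sum_f_R0]; [apply Hf |].
  apply (is_RInt_plus (V := R_NormedModule)); [exact IH | apply Hf].
Qed.

Lemma csc_partial_cesaro_bounds (a : R) (N : nat) : 0 < a < 1 ->
  0 <= INR (S N) * PI - sin (PI * a) * sum_f_R0 (csc_partial a) N <= 2 * PI.
Proof.
  intros Ha.
  assert (Hfejer : is_RInt (fejer N) (- PI) PI (INR (S N) * PI)).
  { rewrite Rmult_comm, <- sum_cte; apply is_RInt_sum_f_R0, is_RInt_dirichlet. }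
  assert (Hcos_fejer : is_RInt (fun x => cos (a * x) * fejer N x) (- PI) PI
                         (sin (PI * a) * sum_f_R0 (csc_partial a) N)).
  { unfold fejer; rewrite scal_sum.
    apply (is_RInt_ext (fun x => sum_f_R0 (fun j => cos (a * x) * dirichlet j x) N)).
    - intros x _; rewrite scal_sum; apply sum_eq; intros j _; apply Rmult_comm.
    - apply (is_RInt_sum_f_R0 (fun j x => cos (a * x) * dirichlet j x)); intros j.
      rewrite Rmult_comm; now apply is_RInt_cos_mul_dirichlet. }
  assert (Hweighted := is_RInt_minus (V := R_NormedModule) _ _ _ _ _ _ Hfejer Hcos_fejer).
  apply (is_RInt_ext _ (fun x => (1 - cos (a * x)) * fejer N x)) in Hweighted;
    [| intros x _; unfold minus, plus, opp; simpl; ring].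
  change (minus ?u ?v) with (u - v) in Hweighted.
  assert (PI_pos := PI_RGT_0).
  assert (Hbounds : forall x, - PI < x < PI -> 0 <= (1 - cos (a * x)) * fejer N x <= 1)
    by (intros x Hx; apply one_minus_cos_mul_fejer_bounds; lra).
  split.
  - assert (H := is_RInt_le _ _ (- PI) PI _ _ ltac:(lra) (is_RInt_const_PI 0) Hweighted
                   (fun x Hx => proj1 (Hbounds x Hx))); lra.
  - assert (H := is_RInt_le _ _ (- PI) PI _ _ ltac:(lra) Hweighted (is_RInt_const_PI 1)
                   (fun x Hx => proj2 (Hbounds x Hx))); lra.
Qed.

Lemma is_lim_seq_csc_partial_cesaro (a : R) : 0 < a < 1 ->
  is_lim_seq (fun N => sum_f_R0 (csc_partial a) N / INR (S N)) (PI / sin (PI * a)).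
Proof.
  intros Ha; assert (PI_pos := PI_RGT_0).
  assert (Hsin : 0 < sin (PI * a)) by (apply sin_gt_0; nra).
  apply (is_lim_seq_le_le (fun N => PI / sin (PI * a) - 2 * PI / sin (PI * a) * / (INR N + 1))
           _ (fun _ => PI / sin (PI * a))).
  - intros N; assert (HN := pos_INR N); destruct (csc_partial_cesaro_bounds a N Ha) as [Hlo Hhi].
    rewrite S_INR in *; set (P := sum_f_R0 (csc_partial a) N) in *.
    set (E := (INR N + 1) * PI - sin (PI * a) * P) in *.
    assert (Hmean : P / (INR N + 1) = PI / sin (PI * a) - E * / sin (PI * a) * / (INR N + 1))
      by (unfold E; field; lra).
    assert (Hinv : 0 < / (INR N + 1)) by (apply Rinv_0_lt_compat; lra).
    assert (Hinv_sin : 0 < / sin (PI * a)) by (apply Rinv_0_lt_compat; lra).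
    assert (0 <= E * / sin (PI * a) * / (INR N + 1) <= 2 * PI / sin (PI * a) * / (INR N + 1)).
    { split; [apply Rmult_le_pos; [apply Rmult_le_pos |] | apply Rmult_le_compat_r;
        [| apply Rmult_le_compat_r]]; lra. }
    lra.
  - replace (Finite (PI / sin (PI * a))) with (Finite (PI / sin (PI * a) - 2 * PI / sin (PI * a) * 0))
      by (f_equal; ring).
    apply is_lim_seq_minus'; [apply is_lim_seq_const |].
    apply is_lim_seq_mult'; [apply is_lim_seq_const | apply is_lim_seq_inv_INR_plus].
  - apply is_lim_seq_const.
Qed.

Lemma csc_partial_limit (a L : R) : 0 < a < 1 ->
  is_lim_seq (csc_partial a) L -> L = PI / sin (PI * a).
Proof.
  intros Ha HL.
  apply is_lim_seq_Reals, Cesaro_1, is_lim_seq_Reals, is_lim_seq_incr_1 in HL.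
  cbn [Nat.pred] in HL; apply is_lim_seq_unique in HL.
  rewrite (is_lim_seq_unique _ _ (is_lim_seq_csc_partial_cesaro a Ha)) in HL.
  now injection HL.
Qed.

Lemma is_series_csc_term (a : R) : 0 < a < 1 ->
  is_series (csc_term a) (PI / sin (PI * a) - / a).
Proof.
  intros Ha.
  assert (Hterm : forall k,
            (-1) ^ k / (INR k + (1 - a)) - (-1) ^ k / (INR k + (1 + a)) = csc_term a k).
  { intros k; assert (Hk := pos_INR k); unfold csc_term.
    replace ((INR k + 1) ^ 2 - a ^ 2) with ((INR k + (1 - a)) * (INR k + (1 + a))) by ring.
    field; split; intro; lra. }
  assert (Hex : ex_series (csc_term a)).
  { apply (ex_series_ext _ _ Hterm), (ex_series_minus (V := R_NormedModule));
      apply ex_series_alt_inv; lra. }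
  assert (Hpartial : forall N, csc_partial a (S N) = / a + sum_n (csc_term a) N).
  { induction N as [|N IH]; [now rewrite sum_O |].
    rewrite sum_Sn; change (csc_partial a (S N) + csc_term a (S N)
                            = / a + (sum_n (csc_term a) N + csc_term a (S N))).
    rewrite IH; ring. }
  assert (Hlim : is_lim_seq (csc_partial a) (/ a + Series (csc_term a))).
  { apply is_lim_seq_incr_1, (is_lim_seq_ext (fun N => / a + sum_n (csc_term a) N));
      [intros N; now rewrite Hpartial |].
    apply is_lim_seq_plus'; [apply is_lim_seq_const | exact (Series_correct _ Hex)]. }
  apply csc_partial_limit in Hlim; [| exact Ha].
  replace (PI / sin (PI * a) - / a) with (Series (csc_term a)) by lra.
  now apply Series_correct.
Qed.

Lemma ex_series_G_pos_G_neg (n : nat) (tau : R) : (1 <= n)%nat -> 0 < tau < 1 ->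
  ex_series (G_pos n tau) /\ ex_series (G_neg n tau).
Proof.
  intros Hn Htau; split.
  - apply (ex_series_ext _ _ (fun k => eq_sym (G_pos_eq tau Htau n k))).
    apply (ex_series_scal_l (V := R_NormedModule)), ex_series_sign_div_pow; [exact Hn | lra].
  - apply (ex_series_ext _ _ (fun k => eq_sym (G_neg_eq tau Htau n k))).
    apply (ex_series_scal_l (V := R_NormedModule)), (ex_series_scal_l (V := R_NormedModule)).
    apply ex_series_sign_div_pow; [exact Hn | lra].
Qed.

Lemma G_one (tau : R) : 0 < tau < 1 -> G 1 tau = 1 - sinc tau.
Proof.
  intros Htau; assert (PI_pos := PI_RGT_0).
  assert (Hsin : 0 < sin (PI * tau)) by (apply sin_gt_0; nra).
  destruct (ex_series_G_pos_G_neg 1 tau (le_n 1) Htau) as [Hpos Hneg].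
  assert (Hterm : forall k, G_pos 1 tau k + G_neg 1 tau k = sin (PI * tau) / PI * csc_term tau k).
  { intros k; assert (Hk := pos_INR k).
    rewrite G_pos_eq, G_neg_eq by exact Htau; unfold csc_term; rewrite !pow_1.
    replace ((INR k + 1) ^ 2 - tau ^ 2) with ((INR k + (- tau + 1)) * (INR k + (tau + 1))) by ring.
    field; repeat split; try exact PI_neq0; intro; lra. }
  unfold G; rewrite <- Series_plus by assumption.
  rewrite (Series_ext _ _ Hterm), Series_scal_l, (is_series_unique _ _ (is_series_csc_term tau Htau)).
  rewrite sinc_eq_ratio by exact Htau.
  field; repeat split; try exact PI_neq0; intro; lra.
Qed.

Theorem lemma1 (n : nat) (tau : R) (hn : (1 <= n)%nat) (htau : 0 < tau < 1) :
  ex_series (G_pos n tau) /\ ex_series (G_neg n tau) /\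
  (n = 1%nat -> G n tau = 1 - sinc tau) /\
  (Nat.even n = true ->
     G n tau = sinc tau ^ n *
       (tau ^ n * (hurwitz_zeta n tau + hurwitz_zeta n (- tau)) - 2)) /\
  (Nat.odd n = true -> (3 <= n)%nat ->
     G n tau = sinc tau ^ n *
       (tau ^ n * (alt_hurwitz_zeta n tau - alt_hurwitz_zeta n (- tau)) - 2)).
Proof.
  destruct (ex_series_G_pos_G_neg n tau hn htau) as [Hpos Hneg].
  assert (HG := G_eq_twisted_hurwitz_zeta n tau hn htau).
  split; [exact Hpos |]; split; [exact Hneg |]; split; [| split].
  - intros ->; exact (G_one tau htau).
  - intros Heven.
    assert (Hsign : (-1) ^ n = 1)
      by (apply Nat.even_spec in Heven; destruct Heven as [m ->]; apply pow_1_even).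
    now rewrite HG, Hsign, Rmult_1_l, !hurwitz_zeta_eq_twisted.
  - intros Hodd _.
    assert (Hsign : (-1) ^ n = -1)
      by (apply Nat.odd_spec in Hodd; destruct Hodd as [m ->]; rewrite Nat.add_1_r; apply pow_1_odd).
    rewrite HG, Hsign; unfold twisted_hurwitz_zeta, alt_hurwitz_zeta; ring.
Qed.
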